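(* Let $W$ be a complex vector space of complex dimension $m \geq 2$ and $G=\mathrm{SL}(W,\mathbb{C})$. Let $f:W \to \mathbb{R}$ be a continuous function such that for each $g \in G$ the function $f \circ g-f$ is a (real) linear function on $W$. Then $f$ is affine. *)

From mathcomp Require Import all_boot all_order all_algebra.
From mathcomp Require Import all_classical all_reals all_analysis.
From mathcomp Require Export complex.
Import Order.TTheory GRing.Theory Num.Theory.
Import numFieldNormedType.Exports.

Set Implicit Arguments.
Unset Strict Implicit.
Unset Printing Implicit Defensive.

Local Open Scope ring_scope.
Local Open Scope complex_scope.

Definition ofRR {R : realType} {m : nat} (p : 'cV[R]_m * 'cV[R]_m) : 'cV[R[i]]_m :=
  \col_(k < m) ((p.1 k 0) +i* (p.2 k 0)).

(* Continuity of a real-valued function on C^m for the standard (Euclidean)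
   topology, i.e. the topology of the underlying real space R^(2m). *)
Definition continuousCm {R : realType} {m : nat} (f : 'cV[R[i]]_m -> R) : Prop :=
  continuous (fun p : 'cV[R]_m * 'cV[R]_m => f (ofRR p)).

Definition Rlinear {R : realType} {m : nat} (L : 'cV[R[i]]_m -> R) : Prop :=
  (forall v w, L (v + w) = L v + L w) /\
  (forall (r : R) v, L ((r%:C)%C *: v) = r * L v).

Definition Raffine {R : realType} {m : nat} (f : 'cV[R[i]]_m -> R) : Prop :=
  exists (L : 'cV[R[i]]_m -> R) (c : R), Rlinear L /\ forall w, f w = L w + c.

Definition inSL {R : realType} {m : nat} (g : 'M[R[i]]_m) : Prop := \det g = 1.

(* Write L_g := f \o g - f.  On the coordinate hyperplane w_k = 0 the matrix
   diag(t, ..., t^(1-m), ..., t) of SL acts as multiplication by t, so the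
   linearity of L_g makes the additivity and homogeneity defects of f on that
   hyperplane invariant under w |-> t w; letting t -> 0 and using continuity,
   f - f 0 is real-linear on each coordinate hyperplane.  Hence f - f 0 agrees
   with the real-linear map Phi w = sum_k (f (w_k e_k) - f 0) on all vectors
   with a zero coordinate, and E := f - f 0 - Phi still has linear defects.
   The rest is algebra: E is invariant under every g in SL sending the real
   basis (e_k, i e_k) to vectors with a zero coordinate; diagonal such g show
   that E w depends only on the product P of the coordinates of w, a
   transvection shows that P |-> E (1, ..., 1, P) is additive and a signed
   transposition that it is even, so E = 0. *)

From mathcomp Require Import all_boot all_order all_algebra.
From mathcomp Require Import all_classical all_reals all_analysis.
From mathcomp Require Import complex lra perm.
Import Order.TTheory GRing.Theory Num.Theory.
Import numFieldNormedType.Exports.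

Set Implicit Arguments.
Unset Strict Implicit.
Unset Printing Implicit Defensive.

Local Open Scope ring_scope.
Local Open Scope classical_set_scope.
Local Open Scope complex_scope.

Definition ecol {R : realType} {n : nat} (k : 'I_n) : 'cV[R[i]]_n := delta_mx k 0.

Definition SL_linear_defect {R : realType} {n : nat} (f : 'cV[R[i]]_n -> R) :=
  forall g : 'M[R[i]]_n, inSL g -> Rlinear (fun w => f (g *m w) - f w).

Definition has_zero_coord {R : realType} {n : nat} (v : 'cV[R[i]]_n) :=
  exists k, v k 0 = 0.

Section RealLinear.
Variables (R : realType) (n : nat).
Implicit Types (L f : 'cV[R[i]]_n -> R) (v : 'cV[R[i]]_n).

Lemma Rlinear0 L : Rlinear L -> L 0 = 0.
Proof. by case=> L_add _; apply/(addrI (L 0)); rewrite -L_add !addr0. Qed.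

Lemma Rlinear_sum L (I : finType) (F : I -> 'cV[R[i]]_n) :
  Rlinear L -> L (\sum_j F j) = \sum_j L (F j).
Proof.
move=> L_lin; have L0 := Rlinear0 L_lin; case: L_lin => L_add _.
exact: (big_morph L L_add L0).
Qed.

Lemma cV_sum_ecol v : v = \sum_k v k 0 *: ecol k.
Proof.
by rewrite {1}(matrix_sum_delta v); apply: eq_bigr => k _; rewrite big_ord1.
Qed.

Lemma cV_Re_Im_sum v :
  v = \sum_k ((complex.Re (v k 0))%:C *: ecol k + (complex.Im (v k 0))%:C *: ('i *: ecol k)).
Proof.
rewrite {1}[v]cV_sum_ecol; apply: eq_bigr => k _.
by rewrite {1}(complexE (v k 0)) scalerDl scalerA [_ * 'i]mulrC.
Qed.

Lemma Rlinear_eq0 L : Rlinear L ->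
  (forall k, L (ecol k) = 0) -> (forall k, L ('i *: ecol k) = 0) -> forall v, L v = 0.
Proof.
move=> L_lin L_e L_ie v; rewrite (cV_Re_Im_sum v) Rlinear_sum //.
apply: big1 => k _; case: L_lin => L_add L_hom.
by rewrite L_add !L_hom L_e L_ie !mulr0 addr0.
Qed.

Lemma SL_linear_defect_sub f L (c : R) : SL_linear_defect f -> Rlinear L ->
  SL_linear_defect (fun w => f w - c - L w).
Proof.
move=> f_def [L_add L_hom] g gSL; have [fg_add fg_hom] := f_def g gSL.
split=> [v w | r v].
  by have := fg_add v w; rewrite !mulmxDr !L_add; lra.
by have := fg_hom r v; rewrite -!scalemxAr !L_hom; lra.
Qed.

End RealLinear.

Section Dilations.
Variables (R : realType) (n : nat) (f : 'cV[R[i]]_n.+1 -> R).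
Hypotheses (f_cont : continuousCm f) (f_def : SL_linear_defect f).

Lemma ofRR_scale (t : R) (v : 'cV[R[i]]_n.+1) :
  ofRR (t *: \col_k complex.Re (v k 0), t *: \col_k complex.Im (v k 0))
  = t%:C *: v.
Proof.
apply/matrixP => k j; rewrite !mxE /= (ord1 j).
by case: (v k 0) => a b /=; rewrite /GRing.mul /= !mul0r subr0 addr0.
Qed.

Lemma cvg_scale_0 (v : 'cV[R[i]]_n.+1) :
  (fun t : R => f (t%:C *: v)) @ 0^' --> f 0.
Proof.
set p1 := \col_k complex.Re (v k 0); set p2 := \col_k complex.Im (v k 0).
have -> : (fun t : R => f (t%:C *: v)) =
    (fun p => f (ofRR p)) \o (fun t : R => (t *: p1, t *: p2)).
  by apply: funext => t /=; rewrite ofRR_scale.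
have -> : f 0 = f (ofRR (0 *: p1, 0 *: p2)) by rewrite ofRR_scale scale0r.
apply: cvg_within_filter; apply: cvg_comp; last exact: f_cont.
apply: (@cvg_pair _ _ _ (nbhs (0 : R)) (nbhs (0 *: p1)) (nbhs (0 *: p2)));
  by apply: continuousZr_tmp; exact: cvg_id.
Qed.

Lemma dnbhs0_cst_lim (phi : R -> R) (c l : R) :
  phi @ 0^' --> l -> (forall t, t != 0 -> phi t = c) -> c = l.
Proof.
move=> phi_l phi_c; rewrite -(cvg_lim _ phi_l) //.
rewrite (@norm_lim_near_cst _ _ _ _ _ c) //; near=> t; apply: phi_c.
by near: t; exact: nbhs_dnbhs_neq.
Unshelve. all: by end_near.
Qed.

Definition dilation (k : 'I_n.+1) (t : R) : 'M[R[i]]_n.+1 :=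
  diag_mx (\row_j if j == k then (t%:C ^+ n)^-1 else t%:C).

Lemma dilation_SL k t : t != 0 -> inSL (dilation k t).
Proof.
move=> t_neq0; rewrite /inSL det_diag (bigD1 k) //= mxE eqxx.
rewrite (eq_bigr (fun=> t%:C)) => [|j /negbTE jk]; last by rewrite mxE jk.
rewrite prodr_const cardC1 card_ord mulVf // expf_neq0 //.
by rewrite eq_complex /= negb_and t_neq0.
Qed.

Lemma dilation_mul k t (w : 'cV[R[i]]_n.+1) :
  w k 0 = 0 -> dilation k t *m w = t%:C *: w.
Proof.
move=> wk0; apply/matrixP => j l; rewrite mul_diag_mx !mxE (ord1 l).
by case: eqP => [->|_]; rewrite ?wk0 ?mulr0.
Qed.

Lemma hyperplane_additive k (w w' : 'cV[R[i]]_n.+1) :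
  w k 0 = 0 -> w' k 0 = 0 -> f (w + w') = f w + f w' - f 0.
Proof.
move=> wk0 w'k0.
suff : f (w + w') - f w - f w' = f 0 - f 0 - f 0 by lra.
apply: (@dnbhs0_cst_lim (fun t => f (t%:C *: (w + w'))
    - f (t%:C *: w) - f (t%:C *: w'))).
  by apply: cvgB; [apply: cvgB|]; exact: cvg_scale_0.
move=> t t_neq0; have [dil_add _] := f_def (dilation_SL k t_neq0).
have := dil_add w w'.
by rewrite !dilation_mul ?mxE ?wk0 ?w'k0 ?addr0 //; lra.
Qed.

Lemma hyperplane_homogeneous k (r : R) (w : 'cV[R[i]]_n.+1) :
  w k 0 = 0 -> f (r%:C *: w) = r * f w + (1 - r) * f 0.
Proof.
move=> wk0.
suff : f (r%:C *: w) - r * f w = f 0 - r * f 0 by lra.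
apply: (@dnbhs0_cst_lim (fun t => f (t%:C *: (r%:C *: w)) - r * f (t%:C *: w))).
  by apply: cvgB; [|apply: cvgMl_tmp]; exact: cvg_scale_0.
move=> t t_neq0; have [_ dil_hom] := f_def (dilation_SL k t_neq0).
have := dil_hom r w.
by rewrite !dilation_mul ?mxE ?wk0 ?mulr0 //; lra.
Qed.

End Dilations.

Definition other_ord {n : nat} (k : 'I_n.+2) : 'I_n.+2 :=
  if k == ord0 then ord_max else ord0.

Lemma other_ord_neq n (k : 'I_n.+2) : other_ord k != k.
Proof. by rewrite /other_ord; case: (k =P ord0) => [->|/eqP]; rewrite // eq_sym. Qed.

Lemma ecol_other_ord {R : realType} {n} (k : 'I_n.+2) :
  ecol k (other_ord k) 0 = 0 :> R[i].
Proof. by rewrite mxE (negbTE (other_ord_neq k)). Qed.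

Section CoordinatePart.
Variables (R : realType) (n : nat) (f : 'cV[R[i]]_n.+2 -> R).
Hypothesis f_add : forall k (w w' : 'cV[R[i]]_n.+2),
  w k 0 = 0 -> w' k 0 = 0 -> f (w + w') = f w + f w' - f 0.
Hypothesis f_hom : forall k (r : R) (w : 'cV[R[i]]_n.+2),
  w k 0 = 0 -> f (r%:C *: w) = r * f w + (1 - r) * f 0.

Definition coord_part (w : 'cV[R[i]]_n.+2) : R :=
  \sum_k (f (w k 0 *: ecol k) - f 0).

Lemma coord_part_Rlinear : Rlinear coord_part.
Proof.
have ecolZ_other_ord (z : R[i]) (k : 'I_n.+2) : (z *: ecol k) (other_ord k) 0 = 0.
  by rewrite mxE ecol_other_ord mulr0.
split=> [v w | r v]; rewrite /coord_part.
  rewrite -big_split; apply: eq_bigr => k _ /=.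
  by rewrite mxE scalerDl (f_add (ecolZ_other_ord _ _) (ecolZ_other_ord _ _)); lra.
rewrite mulr_sumr; apply: eq_bigr => k _.
by rewrite mxE -scalerA (f_hom _ (ecolZ_other_ord _ _)); lra.
Qed.

Lemma coord_part_zero_coord w : has_zero_coord w -> f w = f 0 + coord_part w.
Proof.
case=> k0 wk0; rewrite {1}[w]cV_sum_ecol /coord_part.
pose K (x : 'cV[R[i]]_n.+2) (y : R) := x k0 0 = 0 /\ f x = f 0 + y.
suff [] : K (\sum_k w k 0 *: ecol k) (\sum_k (f (w k 0 *: ecol k) - f 0)) by [].
apply: big_ind2 => [|u a u' a' [uk0 fu] [u'k0 fu'] | k _].
- by split; rewrite ?mxE ?addr0.
- by split; [rewrite mxE uk0 u'k0 addr0 | rewrite (f_add uk0 u'k0) fu fu'; lra].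
- split; last by lra.
  by rewrite !mxE; case: (k0 =P k) => [<-|_]; rewrite ?wk0 ?mul0r ?mulr0.
Qed.

End CoordinatePart.

Section VanishingOnHyperplanes.
Variables (R : realType) (n : nat) (E : 'cV[R[i]]_n.+2 -> R).
Hypotheses (E_def : SL_linear_defect E)
  (E_zero : forall v, has_zero_coord v -> E v = 0).
Implicit Types (v w : 'cV[R[i]]_n.+2) (P : R[i]).

Lemma has_zero_coordZ (c : R[i]) v :
  has_zero_coord v -> has_zero_coord (c *: v).
Proof. by case=> k vk0; exists k; rewrite mxE vk0 mulr0. Qed.

Lemma has_zero_coord_ecol (k : 'I_n.+2) : has_zero_coord (ecol k : 'cV[R[i]]_n.+2).
Proof. by exists (other_ord k); rewrite ecol_other_ord. Qed.

Lemma SL_invariant_cols g : inSL g ->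
  (forall k, has_zero_coord (g *m ecol k)) -> forall v, E (g *m v) = E v.
Proof.
move=> gSL g_cols v; apply/eqP; rewrite -subr_eq0; apply/eqP.
apply: (Rlinear_eq0 (E_def gSL)) => k /=.
  by rewrite (E_zero (g_cols k)) (E_zero (has_zero_coord_ecol k)) subrr.
rewrite -scalemxAr (E_zero (has_zero_coordZ _ (g_cols k))).
by rewrite (E_zero (has_zero_coordZ _ (has_zero_coord_ecol k))) subrr.
Qed.

Definition ones_last P : 'cV[R[i]]_n.+2 :=
  \col_k if k == ord_max then P else 1.

Lemma has_zero_coord_ones_last0 : has_zero_coord (ones_last 0).
Proof. by exists ord_max; rewrite mxE eqxx. Qed.

Lemma E_prod_coords w :
  (forall k, w k 0 != 0) -> E w = E (ones_last (\prod_k w k 0)).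
Proof.
move=> w_neq0.
pose d : 'rV[R[i]]_n.+2 := \row_j if j == ord_max
  then \prod_(k | k != ord_max) w k 0 else (w j 0)^-1.
have dSL : inSL (diag_mx d).
  rewrite /inSL det_diag (bigD1 ord_max) //= mxE eqxx -big_split /=.
  by apply: big1 => j j_max; rewrite mxE (negbTE j_max) mulfV.
have -> : ones_last (\prod_k w k 0) = diag_mx d *m w.
  apply/matrixP => i j; rewrite mul_diag_mx !mxE (ord1 j).
  case: eqP => [->|_]; last by rewrite mulVf.
  by rewrite (bigD1 ord_max) //= mulrC.
symmetry; apply: SL_invariant_cols dSL _ _ => k.
by exists (other_ord k); rewrite mul_diag_mx mxE ecol_other_ord mulr0.
Qed.

Lemma ones_lastD P s : ones_last P + s *: ecol ord_max = ones_last (P + s).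
Proof.
apply/matrixP => i j; rewrite !mxE (ord1 j) eqxx andbT.
by case: (i == ord_max); rewrite ?mulr1 ?mulr0 ?addr0.
Qed.

Definition transvection s : 'M[R[i]]_n.+2 := 1%:M + s *: delta_mx ord_max ord0.

Lemma transvection_SL s : inSL (transvection s).
Proof.
have max_neq0 : (ord_max : 'I_n.+2) != ord0 by [].
rewrite /inSL det_trig.
  apply: big1 => i _; rewrite !mxE eqxx mulr1n.
  case: (i =P ord_max) => [->|_]; last by rewrite mulr0 addr0.
  by rewrite (negbTE max_neq0) andbF mulr0 addr0.
apply/forallP => i; apply/forallP => j; apply/implyP => ij; rewrite !mxE.
have [j_neq0 i_neq_j] : j != ord0 /\ i != j.
  by split; [apply/eqP => j0; rewrite j0 in ij | rewrite neq_ltn ij].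
by rewrite (negbTE j_neq0) (negbTE i_neq_j) andbF mulr0 addr0.
Qed.

Lemma transvection_mul s v :
  transvection s *m v = v + (s * v ord0 0) *: ecol ord_max.
Proof.
rewrite mulmxDl mul1mx -scalemxAl -scalerA; congr (_ + _ *: _).
apply/matrixP => i j; rewrite !mxE (ord1 j) (bigD1 ord0) //= big1.
  by rewrite !mxE eqxx !andbT addr0 mulrC.
by move=> k /negbTE k0; rewrite mxE k0 andbF mul0r.
Qed.

Lemma ones_last_add P s :
  E (ones_last (P + s)) = E (ones_last P) + E (ones_last s).
Proof.
have [T_add _] := E_def (transvection_SL s).
have ones_last_ord0 Q : ones_last Q ord0 0 = 1 by rewrite mxE.
have ecol_max_ord0 : ecol ord_max ord0 0 = 0 :> R[i] := ecol_other_ord ord_max.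
have := T_add (ones_last 0) (P *: ecol ord_max).
rewrite ones_lastD add0r !transvection_mul !ones_last_ord0 mxE ecol_max_ord0.
rewrite !mulr0 scale0r addr0 subrr addr0 mulr1 !ones_lastD add0r.
by rewrite (E_zero has_zero_coord_ones_last0); lra.
Qed.

Definition signed_swap : 'M[R[i]]_n.+2 :=
  diag_mx (\row_j if j == ord0 then -1 else 1) *m perm_mx (tperm ord_max ord0).

Lemma signed_swap_SL : inSL signed_swap.
Proof.
rewrite /inSL det_mulmx det_perm odd_tperm det_diag (bigD1 ord0) //= mxE eqxx.
rewrite big1 => [|j /negbTE j0]; last by rewrite mxE j0.
by rewrite mulr1 expr1 mulrNN mulr1.
Qed.

Lemma signed_swap_mul v i :
  (signed_swap *m v) i 0 = (if i == ord0 then -1 else 1) * v (tperm ord_max ord0 i) 0.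
Proof. by rewrite /signed_swap -mulmxA -row_permE mul_diag_mx !mxE. Qed.

Lemma signed_swap_cols k : has_zero_coord (signed_swap *m ecol k).
Proof.
exists (tperm ord_max ord0 (other_ord k)).
by rewrite signed_swap_mul tpermK ecol_other_ord mulr0.
Qed.

Lemma signed_swap_ones_last P :
  signed_swap *m ones_last P = \col_i if i == ord0 then - P else 1.
Proof.
apply/matrixP => i j; rewrite (ord1 j) signed_swap_mul !mxE.
case: (i =P ord0) => [->|/eqP i0]; first by rewrite tpermR eqxx mulN1r.
rewrite mul1r; case: (i =P ord_max) => [->|/eqP imax]; first by rewrite tpermL.
by rewrite tpermD ?(negbTE imax) // eq_sym.
Qed.

Lemma ones_last_opp P : E (ones_last (- P)) = E (ones_last P).
Proof.
have [->|P_neq0] := eqVneq P 0; first by rewrite oppr0.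
rewrite -(SL_invariant_cols signed_swap_SL signed_swap_cols) signed_swap_ones_last.
rewrite opprK E_prod_coords => [|k]; last by rewrite mxE; case: (k == ord0).
congr (E (ones_last _)).
by rewrite (bigD1 ord0) //= big1 => [|k /negbTE k0]; rewrite !mxE ?eqxx ?k0 ?mulr1.
Qed.

Lemma SL_linear_defect_eq0 v : E v = 0.
Proof.
have E_ones_last P : E (ones_last P) = 0.
  have := ones_last_add P (- P).
  by rewrite ones_last_opp subrr (E_zero has_zero_coord_ones_last0); lra.
have [|v_nz] := pselect (has_zero_coord v); first exact: E_zero.
by rewrite E_prod_coords // => k; apply/eqP => vk0; apply: v_nz; exists k.
Qed.

End VanishingOnHyperplanes.

Local Close Scope complex_scope.
Local Close Scope classical_set_scope.

Theorem lemma3p1 (R : realType) (m : nat) (hm : (2 <= m)%N)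
  (f : 'cV[R[i]]_m -> R) (hf : continuousCm f)
  (hG : forall g : 'M[R[i]]_m, inSL g ->
          Rlinear (fun w : 'cV[R[i]]_m => f (g *m w) - f w)) :
  Raffine f.
Proof.
case: m hm f hf hG => [|[|n]] // _ f f_cont f_def.
have f_add := hyperplane_additive f_cont f_def.
have f_hom := hyperplane_homogeneous f_cont f_def.
have coord_part_lin := coord_part_Rlinear f_add f_hom.
exists (coord_part f), (f 0); split=> // w.
suff : f w - f 0 - coord_part f w = 0 by lra.
apply: (SL_linear_defect_eq0 (SL_linear_defect_sub (f 0) f_def coord_part_lin)).
by move=> v /(coord_part_zero_coord f_add) ->; lra.
Qed.
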